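(* Let $\mathcal{C}$ be a d-category and $f:Y\to X$ a morphism of $\mathcal{C}$-automata such that $f$ is future open, $\bot_X\subseteq f(\bot_Y)$ and $\top_Y=f^{-1}(\top_X)$. Then $\mathrm{Lang}(Y)=\mathrm{Lang}(X)$.
   Context: A d-category is a small category $\mathcal{C}$ with wide subcategories $\mathcal{C}^+$ (formorphisms) and $\mathcal{C}^-$ (backmorphisms) such that an invertible $\varphi$ is in $\mathcal{C}^+$ iff $\varphi^{-1}\in\mathcal{C}^-$. A $\mathcal{C}$-automaton is a presheaf $X:\mathcal{C}^{op}\to\mathbf{Set}$ with sets $\bot_X,\top_X$ of start and accept elements (elements being pairs $(U,x)$, $x\in X[U]$); morphisms of automata are presheaf maps sending start elements to start elements and accept elements to accept elements. A presheaf map $f:Y\to X$ is future open if for every $\varphi\in\mathcal{C}^+(V,U)$, $y\in Y[V]$, $x\in X[U]$ with $X[\varphi](x)=f(y)$ there is $\bar y\in Y[U]$ with $Y[\varphi](\bar y)=y$ and $f(\bar y)=x$. A linear category is a bipointed d-category isomorphic to a finite (possibly empty) concatenation (gluing $\top$ to $\bot$) of $\mathbf S$ (formorphism $\bot\to\top$), $\mathbf T$ (backmorphism $\top\to\bot$), $\mathbf I$ (inverse pair); a path is a d-functor $\omega:\mathcal I\to\mathcal{C}$ from one; its track object is the automaton $\operatorname{colim}_i\mathcal{C}(-,\omega(i))$ with single start element the image of $\mathrm{id}_{\omega(\bot)}$ and single accept element the image of $\mathrm{id}_{\omega(\top)}$; track objects are automata isomorphic to such. $\mathrm{Lang}(X)$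 is the class of track objects $\Gamma$ admitting a morphism of automata $\Gamma\to X$. *)

From Stdlib Require Import Arith Lia List ProofIrrelevance.
Import ListNotations.

Unset Implicit Arguments.


Record Category := {
  Ob : Type;
  Hom : Ob -> Ob -> Type;
  idm : forall a, Hom a a;
  comp : forall a b d, Hom b d -> Hom a b -> Hom a d;
  comp_id_l : forall a b (f : Hom a b), comp _ _ _ (idm b) f = f;
  comp_id_r : forall a b (f : Hom a b), comp _ _ _ f (idm a) = f;
  comp_assoc : forall a b d e (f : Hom a b) (g : Hom b d) (h : Hom d e),
      comp _ _ _ h (comp _ _ _ g f) = comp _ _ _ (comp _ _ _ h g) f
}.
Arguments Hom : clear implicits.
Arguments idm {c} a.
Arguments comp {c a b d} _ _.

Definition wide_subcategory (C : Category) (P : forall a b, Hom C a b -> Prop) :=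
  (forall a, P a a (idm a)) /\
  (forall a b c (f : Hom C a b) (g : Hom C b c), P a b f -> P b c g -> P a c (comp g f)).

Record dCategory := {
  dcat :> Category;
  fwd : forall a b, Hom dcat a b -> Prop;
  bwd : forall a b, Hom dcat a b -> Prop;
  fwd_wide : wide_subcategory dcat fwd;
  bwd_wide : wide_subcategory dcat bwd;
  d_inv : forall a b (phi : Hom dcat a b) (psi : Hom dcat b a),
      comp phi psi = idm b -> comp psi phi = idm a ->
      (fwd a b phi <-> bwd b a psi)
}.
Arguments fwd {d a b} _.
Arguments bwd {d a b} _.

Record Functor (A B : Category) := {
  F_ob :> Ob A -> Ob B;
  F_hom : forall a b, Hom A a b -> Hom B (F_ob a) (F_ob b);
  F_id : forall a, F_hom a a (idm a) = idm (F_ob a);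
  F_comp : forall a b c (f : Hom A a b) (g : Hom A b c),
      F_hom a c (comp g f) = comp (F_hom b c g) (F_hom a b f)
}.
Arguments F_hom {A B} f0 {a b} _.

Record dFunctor (A B : dCategory) := {
  dfun :> Functor A B;
  dfun_fwd : forall a b (f : Hom A a b), fwd f -> fwd (F_hom dfun f);
  dfun_bwd : forall a b (f : Hom A a b), bwd f -> bwd (F_hom dfun f)
}.

Record bdCategory := {
  bdcat :> dCategory;
  bbot : Ob bdcat;
  btop : Ob bdcat
}.

(* isomorphism of bipointed d-categories: a d-functor that is bijective on
   objects and on every hom-set, reflects formorphisms and backmorphisms
   (so that its inverse is a d-functor too) and preserves the base points *)
Definition bd_iso (A B : bdCategory) (F : dFunctor A B) : Prop :=
  (forall b : Ob B, exists a : Ob A, F a = b /\ forall a', F a' = b -> a' = a) /\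
  (forall a a' (f g : Hom A a a'), F_hom F f = F_hom F g -> f = g) /\
  (forall a a' (h : Hom B (F a) (F a')), exists f : Hom A a a', F_hom F f = h) /\
  (forall a a' (f : Hom A a a'), fwd (F_hom F f) -> fwd f) /\
  (forall a a' (f : Hom A a a'), bwd (F_hom F f) -> bwd f) /\
  F (bbot A) = bbot B /\ F (btop A) = btop B.

Arguments bd_iso {A B} F.

Inductive piece := pS | pT | pI.

(* In the concatenation of the word w (objects 0..length w, piece number m
   glued between m and m+1) there is a (unique) morphism i -> j iff one can
   walk forward along pieces S or I, or backward along pieces T or I. *)
Definition reach (w : list piece) (i j : nat) : Prop :=
  (i <= j /\ forall m, i <= m < j -> nth m w pS <> pT) \/
  (j <= i /\ forall m, j <= m < i -> nth m w pS <> pS).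

Lemma reach_refl w i : reach w i i.
Proof. left; split; [lia | intros m Hm; lia]. Qed.

Lemma reach_trans w i j k : reach w i j -> reach w j k -> reach w i k.
Proof.
  intros [[H1 F1]|[H1 B1]] [[H2 F2]|[H2 B2]].
  - left; split; [lia|]; intros m Hm.
    destruct (Nat.lt_ge_cases m j); [apply F1|apply F2]; lia.
  - destruct (Nat.le_gt_cases i k).
    + left; split; [lia|]; intros m Hm; apply F1; lia.
    + right; split; [lia|]; intros m Hm; apply B2; lia.
  - destruct (Nat.le_gt_cases i k).
    + left; split; [lia|]; intros m Hm; apply F2; lia.
    + right; split; [lia|]; intros m Hm; apply B1; lia.
  - right; split; [lia|]; intros m Hm.
    destruct (Nat.lt_ge_cases m j); [apply B2|apply B1]; lia.
Qed.

Arguments reach_trans {w i j k} _ _.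

Definition LOb (w : list piece) := { k : nat | k <= length w }.

Definition LCat (w : list piece) : Category.
Proof.
  refine {| Ob := LOb w;
            Hom := fun a b => reach w (proj1_sig a) (proj1_sig b);
            idm := fun a => reach_refl w (proj1_sig a);
            comp := fun a b c g f => reach_trans f g |}.
  all: intros; apply proof_irrelevance.
Defined.

Definition LdCat (w : list piece) : dCategory.
Proof.
  refine {| dcat := LCat w;
            fwd := fun a b _ => proj1_sig a <= proj1_sig b;
            bwd := fun a b _ => proj1_sig b <= proj1_sig a |}.
  - split; simpl; intros; lia.
  - split; simpl; intros; lia.
  - intros; simpl; tauto.
Defined.

Definition Lin (w : list piece) : bdCategory :=
  {| bdcat := LdCat w;
     bbot := exist (fun k => k <= length w) 0 (Nat.le_0_l _);
     btop := exist (fun k => k <= length w) (length w) (le_n _) |}.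

Definition is_linear (I : bdCategory) : Prop :=
  exists (w : list piece) (F : dFunctor I (Lin w)), bd_iso F.

Record Presheaf (C : Category) := {
  ps_ob :> Ob C -> Type;
  ps_act : forall U V, Hom C V U -> ps_ob U -> ps_ob V;
  ps_id : forall U (x : ps_ob U), ps_act U U (idm U) x = x;
  ps_comp : forall U V W (phi : Hom C V U) (psi : Hom C W V) (x : ps_ob U),
      ps_act U W (comp phi psi) x = ps_act V W psi (ps_act U V phi x)
}.
Arguments ps_act {C} p {U V} _ _.

Arguments ps_ob {C} p _.

Record PshMap (C : Category) (Y X : Presheaf C) := {
  pm :> forall U, Y U -> X U;
  pm_nat : forall U V (phi : Hom C V U) (y : Y U),
      pm V (ps_act Y phi y) = ps_act X phi (pm U y)
}.
Arguments pm {C Y X} _ U _.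

Record Automaton (C : Category) := {
  aut_psh :> Presheaf C;
  start : forall U, ps_ob aut_psh U -> Prop;
  accept : forall U, ps_ob aut_psh U -> Prop
}.
Arguments start {C} a U _.
Arguments accept {C} a U _.

Arguments PshMap {C} Y X.

Record AutMorphism (C : Category) (Y X : Automaton C) := {
  am :> PshMap Y X;
  am_start : forall U y, start Y U y -> start X U (am U y);
  am_accept : forall U y, accept Y U y -> accept X U (am U y)
}.

Arguments AutMorphism {C} Y X.

Arguments am {C Y X} _.

Definition future_open (C : dCategory) (Y X : Presheaf C) (f : PshMap Y X) : Prop :=
  forall U V (phi : Hom C V U), fwd phi ->
  forall (y : Y V) (x : X U), ps_act X phi x = f V y ->
  exists ybar : Y U, ps_act Y phi ybar = y /\ f U ybar = x.

Arguments future_open {C Y X} f.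

(* a cocone from the diagram  i |-> C(-, omega i)  into Z *)
Definition is_cocone (C I : Category) (om : Functor I C) (Z : Presheaf C)
  (mu : forall i U, Hom C U (om i) -> Z U) : Prop :=
  (forall i U V (g : Hom C U (om i)) (phi : Hom C V U),
      mu i V (comp g phi) = ps_act Z phi (mu i U g)) /\
  (forall i j (alpha : Hom I i j) U (g : Hom C U (om i)),
      mu j U (comp (F_hom om alpha) g) = mu i U g).

Arguments is_cocone {C I} om Z mu.

Definition is_colimit (C I : Category) (om : Functor I C) (G : Presheaf C)
  (lam : forall i U, Hom C U (om i) -> G U) : Prop :=
  is_cocone om G lam /\
  forall (Z : Presheaf C) (mu : forall i U, Hom C U (om i) -> Z U),
    is_cocone om Z mu ->
    exists h : PshMap G Z,
      (forall i U g, h U (lam i U g) = mu i U g) /\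
      (forall h' : PshMap G Z, (forall i U g, h' U (lam i U g) = mu i U g) ->
         forall U x, h' U x = h U x).

Arguments is_colimit {C I} om G lam.

Definition is_track_object (C : dCategory) (G : Automaton C) : Prop :=
  exists (I : bdCategory) (om : dFunctor I C)
         (lam : forall i U, Hom C U (om i) -> G U),
    is_linear I /\
    is_colimit om G lam /\
    (forall U (x : G U), start G U x <->
       existT (fun U => G U) U x =
       existT (fun U => G U) (om (bbot I)) (lam (bbot I) _ (idm (om (bbot I))))) /\
    (forall U (x : G U), accept G U x <->
       existT (fun U => G U) U x =
       existT (fun U => G U) (om (btop I)) (lam (btop I) _ (idm (om (btop I))))).

Arguments is_track_object {C} G.

Definition in_Lang (C : dCategory) (G X : Automaton C) : Prop :=
  is_track_object G /\ inhabited (AutMorphism G X).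

Arguments in_Lang {C} G X.

From Stdlib Require Import Arith Lia List ProofIrrelevance IndefiniteDescription.

(* Composing with f gives Lang(Y) ⊆ Lang(X).  Conversely, a morphism from the
   track object Γ of a path ω : I → C to X is a compatible family of elements
   x_i ∈ X[ω i], and such a family lifts along f, piece by piece from a start
   lift at ⊥: across an S piece the next lift exists because f is future open,
   across a T or I piece it is the restriction along the backmorphism.  By the
   colimit property the lifted family is a map h : Γ → Y with f ∘ h equal to
   the given map, so h preserves accept elements because ⊤_Y = f⁻¹(⊤_X). *)

Definition compatible {C I : Category} (om : Functor I C) (Z : Presheaf C)
  (z : forall i, Z (om i)) : Prop :=
  forall i j (a : Hom I i j), ps_act Z (F_hom om a) (z j) = z i.

Definition pcomp {C : Category} {A B D : Presheaf C}
  (g : PshMap B D) (h : PshMap A B) : PshMap A D.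
Proof.
  refine {| pm := fun U a => g U (h U a) |}.
  intros; rewrite !pm_nat; reflexivity.
Defined.

Definition aut_comp {C : Category} {A B D : Automaton C}
  (g : AutMorphism B D) (h : AutMorphism A B) : AutMorphism A D.
Proof.
  refine {| am := pcomp g h |}; intros U a Ha; simpl.
  - apply am_start, am_start, Ha.
  - apply am_accept, am_accept, Ha.
Defined.

Lemma compatible_map {C I : Category} {om : Functor I C} {Z W : Presheaf C}
  (h : PshMap Z W) {z : forall i, Z (om i)} :
  compatible om Z z -> compatible om W (fun i => h _ (z i)).
Proof. intros Hz i j a; rewrite <- pm_nat, Hz; reflexivity. Qed.

Lemma in_Lang_comp {C : dCategory} {G Y X : Automaton C} :
  in_Lang G Y -> AutMorphism Y X -> in_Lang G X.
Proof. intros [HG [h]] f; exact (conj HG (inhabits (aut_comp f h))). Qed.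

Lemma existT_eq_pred {A : Type} {T : A -> Type} (P : forall a, T a -> Prop)
  a b (x : T a) (y : T b) :
  existT T a x = existT T b y -> P b y -> P a x.
Proof.
  intros E H.
  exact (match eq_sym E in _ = s return P (projT1 s) (projT2 s) with eq_refl => H end).
Qed.

Section Colimit.
Context {C I : Category} {om : Functor I C} {G : Presheaf C}
  {lam : forall i U, Hom C U (om i) -> G U}.
Hypothesis Hcol : is_colimit om G lam.

Definition generator i : G (om i) := lam i (om i) (idm (om i)).

Lemma lam_generator i U (g : Hom C U (om i)) : lam i U g = ps_act G g (generator i).
Proof. unfold generator; rewrite <- (proj1 (proj1 Hcol)), comp_id_l; reflexivity. Qed.

Lemma generator_compatible : compatible om G generator.
Proof.
  intros i j a; rewrite <- lam_generator, <- (comp_id_r _ _ _ (F_hom om a)).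
  apply (proj2 (proj1 Hcol)).
Qed.

Lemma colimit_factor {Z : Presheaf C} {z : forall i, Z (om i)} :
  compatible om Z z -> exists h : PshMap G Z, forall i, h _ (generator i) = z i.
Proof.
  intros Hz.
  destruct (proj2 Hcol Z (fun i U g => ps_act Z g (z i))) as [h [Hh _]].
  { split; intros.
    - apply ps_comp.
    - rewrite ps_comp, Hz; reflexivity. }
  exists h; intro i; unfold generator; rewrite Hh; apply ps_id.
Qed.

Lemma colimit_ext {Z : Presheaf C} (h h' : PshMap G Z) :
  (forall i, h _ (generator i) = h' _ (generator i)) -> forall U z, h U z = h' U z.
Proof.
  intros E U z.
  destruct (proj2 Hcol Z (fun i U g => h U (lam i U g))) as [k [_ Hk]].
  { split; intros.
    - rewrite (proj1 (proj1 Hcol)); apply pm_nat.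
    - rewrite (proj2 (proj1 Hcol)); reflexivity. }
  transitivity (k U z); [apply Hk; reflexivity | symmetry; apply Hk].
  intros i U' g; rewrite lam_generator, !pm_nat, E; reflexivity.
Qed.

End Colimit.

Arguments generator {C I} om {G} lam i.

Lemma reach_of_eq w i j : i = j -> reach w i j.
Proof. intros ->; apply reach_refl. Qed.

Lemma reach_split w i j m :
  reach w i j -> Nat.min i j <= m <= Nat.max i j -> reach w i m /\ reach w m j.
Proof.
  intros [[Hij Hf] | [Hji Hb]] Hm.
  - split; left; split; try lia; intros n Hn; apply Hf; lia.
  - split; right; split; try lia; intros n Hn; apply Hb; lia.
Qed.

Lemma eq_pS_dec (p : piece) : p = pS \/ p <> pS.
Proof. destruct p; [left | right | right]; congruence. Qed.

Lemma reach_succ_fwd w i : nth i w pS = pS -> reach w i (S i).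
Proof.
  intros Hp; left; split; [lia |].
  intros m Hm; replace m with i by lia; rewrite Hp; discriminate.
Qed.

Lemma reach_succ_bwd w i : nth i w pS <> pS -> reach w (S i) i.
Proof. intros Hp; right; split; [lia |]; intros m Hm; replace m with i by lia; exact Hp. Qed.

Section LinearCategory.
Context {I : bdCategory} {w : list piece} {F : dFunctor I (Lin w)}.
Hypothesis Hiso : bd_iso F.

Definition pos (i : Ob I) : nat := proj1_sig (F i).

Lemma pos_le_length i : pos i <= length w.
Proof. exact (proj2_sig (F i)). Qed.

Lemma pos_bot : pos (bbot I) = 0.
Proof. unfold pos; destruct Hiso as (_ & _ & _ & _ & _ & -> & _); reflexivity. Qed.

Lemma pos_inj a b : pos a = pos b -> a = b.
Proof.
  intros E; destruct Hiso as [Hbij _].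
  destruct (Hbij (F a)) as [c [_ Hc]].
  rewrite (Hc a eq_refl); symmetry; apply Hc.
  apply eq_sig_hprop; [intros; apply proof_irrelevance | symmetry; exact E].
Qed.

Lemma hom_eq a b (u v : Hom I a b) : u = v.
Proof.
  destruct Hiso as (_ & Hfaithful & _); apply Hfaithful.
  change (@eq (reach w (pos a) (pos b)) (F_hom F u) (F_hom F v)).
  apply proof_irrelevance.
Qed.

Lemma reach_of_hom a b (u : Hom I a b) : reach w (pos a) (pos b).
Proof. exact (F_hom F u). Qed.

Definition hom_of_reach a b (r : reach w (pos a) (pos b)) : Hom I a b :=
  proj1_sig (constructive_indefinite_description _ (proj1 (proj2 (proj2 Hiso)) a b r)).

Definition hom_of_pos_eq a b (E : pos a = pos b) : Hom I a b :=
  hom_of_reach a b (reach_of_eq w _ _ E).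

Lemma fwd_of_pos_le a b (u : Hom I a b) : pos a <= pos b -> fwd u.
Proof. destruct Hiso as (_ & _ & _ & Hfwd & _); intros H; apply Hfwd; exact H. Qed.

(* Positions beyond the end are clamped to [length w], so that [obj_at] is total. *)
Definition obj_at (k : nat) : Ob I :=
  proj1_sig (constructive_indefinite_description _
    (proj1 Hiso (exist (fun n => n <= length w) (Nat.min k (length w))
                       (Nat.le_min_r _ _)))).

Lemma pos_obj_at k : pos (obj_at k) = Nat.min k (length w).
Proof.
  unfold pos, obj_at.
  destruct (constructive_indefinite_description _ _) as [a Ha]; simpl.
  exact (f_equal (@proj1_sig _ _) (proj1 Ha)).
Qed.

Lemma pos_obj_at_pos i : pos (obj_at (pos i)) = pos i.
Proof. rewrite pos_obj_at; apply Nat.min_l, pos_le_length. Qed.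

Section Lifting.
Context {C : dCategory} {Y X : Presheaf C} {f : PshMap Y X}.
Hypothesis Hopen : future_open f.
Context {om : dFunctor I C} {x : forall i, X (om i)}.
Hypothesis Hx : compatible om X x.
Context {y0 : Y (om (bbot I))}.
Hypothesis Hy0 : f _ y0 = x (bbot I).

(* Since [I] is thin, this is compatibility of the pair [ya], [yb]. *)
Definition agree a b (ya : Y (om a)) (yb : Y (om b)) : Prop :=
  (forall u : Hom I a b, ps_act Y (F_hom om u) yb = ya) /\
  (forall v : Hom I b a, ps_act Y (F_hom om v) ya = yb).

Lemma agree_sym a b ya yb : agree a b ya yb -> agree b a yb ya.
Proof. intros [H1 H2]; split; assumption. Qed.

Lemma agree_refl a ya : agree a a ya ya.
Proof. split; intro u; rewrite (hom_eq _ _ u (idm a)), F_id; apply ps_id. Qed.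

Lemma agree_refl_eq a ya ya' : agree a a ya ya' -> ya = ya'.
Proof. intros [H _]; rewrite <- (H (idm a)), F_id, ps_id; reflexivity. Qed.

Lemma agree_of_hom a b (u : Hom I a b) ya yb :
  ps_act Y (F_hom om u) yb = ya -> agree a b ya yb.
Proof.
  intros Hu; split.
  - intro u'; rewrite (hom_eq _ _ u' u); exact Hu.
  - intro v; rewrite <- Hu, <- ps_comp, <- F_comp, (hom_eq _ _ (comp u v) (idm b)), F_id.
    apply ps_id.
Qed.

Lemma act_through a m b ya ym yb :
  Nat.min (pos a) (pos b) <= pos m <= Nat.max (pos a) (pos b) ->
  (forall u : Hom I a m, ps_act Y (F_hom om u) ym = ya) ->
  (forall u : Hom I m b, ps_act Y (F_hom om u) yb = ym) ->
  forall u : Hom I a b, ps_act Y (F_hom om u) yb = ya.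
Proof.
  intros Hm Ham Hmb u.
  destruct (reach_split w _ _ _ (reach_of_hom _ _ u) Hm) as [r1 r2].
  rewrite (hom_eq _ _ u (comp (hom_of_reach m b r2) (hom_of_reach a m r1))).
  rewrite F_comp, ps_comp, Hmb; apply Ham.
Qed.

Lemma agree_trans a m b ya ym yb :
  Nat.min (pos a) (pos b) <= pos m <= Nat.max (pos a) (pos b) ->
  agree a m ya ym -> agree m b ym yb -> agree a b ya yb.
Proof.
  intros Hm [Ham Hma] [Hmb Hbm]; split.
  - exact (act_through a m b ya ym yb Hm Ham Hmb).
  - apply (act_through b m a yb ym ya); [lia | assumption | assumption].
Qed.

Lemma lift_step a b (ya : Y (om a)) :
  pos b = pos a \/ pos b = S (pos a) -> f _ ya = x a ->
  exists yb, f _ yb = x b /\ agree a b ya yb.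
Proof.
  intros [E | E] Hya.
  - assert (a = b) as <- by (apply pos_inj; congruence).
    exists ya; split; [exact Hya | apply agree_refl].
  - destruct (eq_pS_dec (nth (pos a) w pS)) as [Hp | Hp].
    + assert (r : reach w (pos a) (pos b)) by (rewrite E; apply reach_succ_fwd, Hp).
      set (u := hom_of_reach a b r).
      assert (Hu : fwd (F_hom om u)) by (apply dfun_fwd, fwd_of_pos_le; lia).
      destruct (Hopen _ _ _ Hu ya (x b)) as [yb [Hact Hyb]]; [rewrite Hx; auto |].
      exists yb; split; [exact Hyb | exact (agree_of_hom a b u ya yb Hact)].
    + assert (r : reach w (pos b) (pos a)) by (rewrite E; apply reach_succ_bwd, Hp).
      set (v := hom_of_reach b a r).
      exists (ps_act Y (F_hom om v) ya); split.
      * rewrite pm_nat, Hya; apply Hx.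
      * apply agree_sym, (agree_of_hom b a v); reflexivity.
Qed.

Lemma pos_obj_at_succ k :
  pos (obj_at (S k)) = pos (obj_at k) \/ pos (obj_at (S k)) = S (pos (obj_at k)).
Proof. rewrite !pos_obj_at; lia. Qed.

Lemma pos_obj_at_0 : pos (obj_at 0) = pos (bbot I).
Proof. rewrite pos_obj_at, pos_bot; reflexivity. Qed.

Definition chain_start : Y (om (obj_at 0)) :=
  ps_act Y (F_hom om (hom_of_pos_eq _ _ pos_obj_at_0)) y0.

Lemma chain_start_over : f _ chain_start = x (obj_at 0).
Proof. unfold chain_start; rewrite pm_nat, Hy0; apply Hx. Qed.

Definition lifts_at k := { y : Y (om (obj_at k)) | f _ y = x (obj_at k) }.

Definition chain_next k (s : lifts_at k) :
  { y' | f _ y' = x (obj_at (S k)) /\ agree _ _ (proj1_sig s) y' } :=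
  constructive_indefinite_description _
    (lift_step _ _ _ (pos_obj_at_succ k) (proj2_sig s)).

Fixpoint chain k : lifts_at k :=
  match k with
  | 0 => exist _ chain_start chain_start_over
  | S k => let s := chain_next k (chain k) in exist _ (proj1_sig s) (proj1 (proj2_sig s))
  end.

Lemma chain_agree_le k l : k <= l ->
  agree (obj_at k) (obj_at l) (proj1_sig (chain k)) (proj1_sig (chain l)).
Proof.
  induction l as [| l IH]; intros Hkl.
  - replace k with 0 by lia; apply agree_refl.
  - destruct (Nat.eq_dec k (S l)) as [-> | Hk]; [apply agree_refl |].
    apply (agree_trans _ (obj_at l) _ _ (proj1_sig (chain l))).
    + rewrite !pos_obj_at; lia.
    + apply IH; lia.
    + exact (proj2 (proj2_sig (chain_next l (chain l)))).
Qed.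

Lemma chain_agree k l :
  agree (obj_at k) (obj_at l) (proj1_sig (chain k)) (proj1_sig (chain l)).
Proof.
  destruct (Nat.le_ge_cases k l); [| apply agree_sym]; apply chain_agree_le; assumption.
Qed.

(* The chain is indexed by positions; [lifted] moves it to the objects of [I]. *)
Definition lifted i : Y (om i) :=
  ps_act Y (F_hom om (hom_of_pos_eq _ _ (eq_sym (pos_obj_at_pos i))))
    (proj1_sig (chain (pos i))).

Lemma lifted_agree_chain i :
  agree i (obj_at (pos i)) (lifted i) (proj1_sig (chain (pos i))).
Proof. exact (agree_of_hom _ _ _ _ _ eq_refl). Qed.

Lemma lifted_agree i j : agree i j (lifted i) (lifted j).
Proof.
  apply (agree_trans _ (obj_at (pos i)) _ _ (proj1_sig (chain (pos i)))).
  - rewrite pos_obj_at_pos; lia.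
  - apply lifted_agree_chain.
  - apply (agree_trans _ (obj_at (pos j)) _ _ (proj1_sig (chain (pos j)))).
    + rewrite !pos_obj_at_pos; lia.
    + apply chain_agree.
    + apply agree_sym, lifted_agree_chain.
Qed.

Lemma lifted_over i : f _ (lifted i) = x i.
Proof. unfold lifted; rewrite pm_nat, (proj2_sig (chain (pos i))); apply Hx. Qed.

Lemma lifted_bot : lifted (bbot I) = y0.
Proof.
  apply (agree_refl_eq (bbot I)).
  apply (agree_trans _ (obj_at 0) _ _ chain_start); [rewrite pos_obj_at, pos_bot; lia | |].
  - apply (agree_trans _ (obj_at (pos (bbot I))) _ _ (proj1_sig (chain (pos (bbot I))))).
    + rewrite pos_obj_at_pos, pos_obj_at, pos_bot; lia.
    + apply lifted_agree_chain.
    + apply (chain_agree _ 0).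
  - exact (agree_of_hom _ _ _ _ _ eq_refl).
Qed.

Lemma path_lifting : exists y : forall i, Y (om i),
  compatible om Y y /\ (forall i, f _ (y i) = x i) /\ y (bbot I) = y0.
Proof.
  exists lifted; repeat split.
  - intros i j a; exact (proj1 (lifted_agree i j) a).
  - exact lifted_over.
  - exact lifted_bot.
Qed.

End Lifting.
End LinearCategory.

Theorem proposition12 (C : dCategory) (Y X : Automaton C) (f : AutMorphism Y X)
  (Hopen : future_open f)
  (Hstart : forall U (x : X U), start X U x ->
              exists y : Y U, start Y U y /\ f U y = x)
  (Haccept : forall U (y : Y U), accept Y U y <-> accept X U (f U y)) :
  forall G : Automaton C, in_Lang G Y <-> in_Lang G X.
Proof.
  intro G; split; [intro HY; exact (in_Lang_comp HY f) |].
  intros [HG [g]]; split; [exact HG |].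
  destruct HG as (I & om & lam & [w [F Hiso]] & Hcol & Hst & _).
  assert (Hbot : start G _ (generator om lam (bbot I))) by (apply Hst; reflexivity).
  destruct (Hstart _ _ (am_start _ _ _ g _ _ Hbot)) as [y0 [Hy0 Ey0]].
  destruct (path_lifting Hiso Hopen (compatible_map g (generator_compatible Hcol)) Ey0)
    as (y & Hy & Hfy & Hybot).
  destruct (colimit_factor Hcol Hy) as [h Hh].
  assert (Hfh : forall U z, f U (h U z) = g U z).
  { apply (colimit_ext Hcol (pcomp f h) g); intro i; simpl; rewrite Hh; apply Hfy. }
  refine (inhabits {| am := h |}).
  - intros U z Hz.
    apply (existT_eq_pred (fun U z => start Y U (h U z)) _ _ _ _ (proj1 (Hst U z) Hz)).
    change (start Y _ (h _ (generator om lam (bbot I)))).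
    rewrite Hh, Hybot; exact Hy0.
  - intros U z Hz; apply Haccept; rewrite Hfh; apply am_accept, Hz.
Qed.
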